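(* Every $K$-algebra endomorphism of $\mathbb{S}_1$ is either injective or its image is a commutative finite-dimensional algebra. Moreover, for every positive integer $d$ there is an endomorphism of $\mathbb{S}_1$ whose image has dimension exactly $d$.
   Context: $K$ is a field of characteristic zero and $\mathbb{S}_1=K\langle x,y\mid yx=1\rangle$ is the $K$-algebra generated by $x,y$ with the single defining relation $yx=1$. *)

From HB Require Import structures.
From mathcomp Require Import all_boot all_order all_algebra.
Set Implicit Arguments. Unset Strict Implicit. Unset Printing Implicit Defensive.
Import GRing.Theory.
Local Open Scope ring_scope.

Definition alg_morph (K : fieldType) (A B : algType K) (f : A -> B) : Prop :=
  [/\ forall a b, f (a + b) = f a + f b,
      forall (k : K) a, f (k *: a) = k *: f a,
      f 1 = 1
    & forall a b, f (a * b) = f a * f b].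

(* (A, x, y) is the K-algebra presented by generators x, y and the single
   relation y x = 1, i.e. A = K<x,y | yx = 1> = S_1, characterised by its
   universal property (which is the definition of a presented algebra). *)
Definition S1_presentation (K : fieldType) (A : algType K) (x y : A) : Prop :=
  y * x = 1 /\
  forall (B : algType K) (a b : B), b * a = 1 ->
    (exists f : A -> B, alg_morph f /\ f x = a /\ f y = b) /\
    (forall f g : A -> B, alg_morph f -> alg_morph g ->
       f x = g x -> f y = g y -> forall z, f z = g z).

Definition image_of (A B : Type) (f : A -> B) (v : B) : Prop := exists a, f a = v.

Definition is_basis (K : fieldType) (A : lmodType K) (P : A -> Prop)
    (d : nat) (v : 'I_d -> A) : Prop :=
  [/\ forall i, P (v i),
      forall w, P w -> exists c : 'I_d -> K, w = \sum_(i < d) c i *: v i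
    & forall c : 'I_d -> K, \sum_(i < d) c i *: v i = 0 -> forall i, c i = 0].

Definition has_dim (K : fieldType) (A : lmodType K) (P : A -> Prop) (d : nat) : Prop :=
  exists v : 'I_d -> A, is_basis P v.

(* Put idem := 1 - x y.  In any algebra with y x = 1 the elements
   x^r idem y^l multiply like matrix units, and the "corner"
   idem y^m z x^n idem of any combination z of monomials x^i y^j is a scalar
   multiple of idem.  In S_1 itself idem <> 0 (the shift operators on K^N
   satisfy y x = 1 but not x y = 1), and every element is a combination of
   monomials (the universal property applied to the subalgebra they span).

   Let f be an endomorphism.  If f idem <> 0, the corner coefficients of
   any z in the kernel vanish, and they determine z, so f is injective.  If
   f idem = 0, then a := f x and b := f y are commuting mutually inverse
   units and the image is spanned by the powers of a and b.  A unit a of S_1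
   is a scalar up to a finite-rank part: a x^N and b x^N lie in K[x] and
   multiply to x^(2N), so a x^N = lam x^k; a Fredholm-index argument with
   finite matrices in a corner excludes k <> N, and then a - lam lies in a
   corner matrix algebra and is algebraic by Cayley-Hamilton.  Hence the
   image is finite dimensional.  Conversely, n := x (1 - x^(d-1) y^(d-1)) is
   nilpotent of order d, and x |-> 1 + n, y |-> (1 + n)^-1 has image with
   basis 1, n, ..., n^(d-1). *)

From HB Require Import structures.
From mathcomp Require Import all_boot all_order all_algebra.
From mathcomp Require Import boolp zify.
Import GRing.Theory.
Local Open Scope ring_scope.

Set Implicit Arguments.
Unset Strict Implicit.
Unset Printing Implicit Defensive.

Section AlgMorphism.
Variables (K : fieldType) (A B : algType K) (f : A -> B).
Hypothesis fM : alg_morph f.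

Lemma morphD a b : f (a + b) = f a + f b. Proof. by case: fM. Qed.
Lemma morphZ c a : f (c *: a) = c *: f a. Proof. by case: fM. Qed.
Lemma morph1 : f 1 = 1. Proof. by case: fM. Qed.
Lemma morphM a b : f (a * b) = f a * f b. Proof. by case: fM. Qed.
Lemma morph0 : f 0 = 0. Proof. by rewrite -(scale0r 0) morphZ scale0r. Qed.
Lemma morphN a : f (- a) = - f a. Proof. by rewrite -scaleN1r morphZ scaleN1r. Qed.
Lemma morphB a b : f (a - b) = f a - f b. Proof. by rewrite morphD morphN. Qed.
Lemma morphX a n : f (a ^+ n) = f a ^+ n.
Proof. by elim: n => [|n IH]; rewrite ?expr0 ?morph1 // !exprS morphM IH. Qed.
Lemma morph_scalar c : f c%:A = c%:A. Proof. by rewrite morphZ morph1. Qed.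
Lemma morph_sum (I : Type) (r : seq I) (F : I -> A) :
  f (\sum_(i <- r) F i) = \sum_(i <- r) f (F i).
Proof. by elim: r => [|i r IH]; rewrite ?big_nil ?morph0 // !big_cons morphD IH. Qed.
End AlgMorphism.

Lemma alg_morph_id (K : fieldType) (A : algType K) : alg_morph (@id A).
Proof. by []. Qed.

Lemma alg_morph_comp (K : fieldType) (A B C : algType K) (f : A -> B) (g : B -> C) :
  alg_morph f -> alg_morph g -> alg_morph (g \o f).
Proof.
by move=> [f1 f2 f3 f4] [g1 g2 g3 g4]; split=> * /=;
  rewrite ?f1 ?f2 ?f3 ?f4 ?g1 ?g2 ?g3 ?g4.
Qed.

(* A subset of an algebra, described by an arbitrary proposition and closed
   under the algebra operations, is itself an algebra whose inclusion is a
   morphism.  This lets the universal property of S_1 prove that every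
   element has a given property. *)
Section PropSubalgebra.
Variables (K : fieldType) (A : algType K) (S : A -> Prop).

Record subalg_pred := SubalgPred {
  sub1 : S 1;
  subD : forall u v, S u -> S v -> S (u + v);
  subM : forall u v, S u -> S v -> S (u * v);
  subZ : forall c u, S u -> S (c *: u) }.

Variable closedS : subalg_pred.

Definition subalg_type (_ : subalg_pred) : Type := {z : A | S z}.
Local Notation U := (subalg_type closedS).

HB.instance Definition _ := gen_eqMixin U.
HB.instance Definition _ := gen_choiceMixin U.

Lemma subalg_ext (u v : U) : sval u = sval v -> u = v.
Proof. by case: u v => u Su [v Sv] /= uv; apply: eq_exist. Qed.

Let sub0 : S 0. Proof. by rewrite -(scale0r 1); apply: subZ (sub1 closedS). Qed.
Let subN u : S u -> S (- u). Proof. by rewrite -scaleN1r; apply: subZ. Qed.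

Definition sub_zero : U := exist _ 0 sub0.
Definition sub_one : U := exist _ 1 (sub1 closedS).
Definition sub_add (u v : U) : U := exist _ _ (subD closedS (svalP u) (svalP v)).
Definition sub_opp (u : U) : U := exist _ _ (subN (svalP u)).
Definition sub_mul (u v : U) : U := exist _ _ (subM closedS (svalP u) (svalP v)).
Definition sub_scale c (u : U) : U := exist _ _ (subZ closedS c (svalP u)).

Let sub_addA : associative sub_add.
Proof. by move=> *; apply: subalg_ext; rewrite /= addrA. Qed.
Let sub_addC : commutative sub_add.
Proof. by move=> *; apply: subalg_ext; rewrite /= addrC. Qed.
Let sub_add0 : left_id sub_zero sub_add.
Proof. by move=> *; apply: subalg_ext; rewrite /= add0r. Qed.
Let sub_addN : left_inverse sub_zero sub_opp sub_add.
Proof. by move=> *; apply: subalg_ext; rewrite /= addNr. Qed.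
HB.instance Definition _ := GRing.isZmodule.Build U sub_addA sub_addC sub_add0 sub_addN.

Let sub_mulA : associative sub_mul.
Proof. by move=> *; apply: subalg_ext; rewrite /= mulrA. Qed.
Let sub_mul1 : left_id sub_one sub_mul.
Proof. by move=> *; apply: subalg_ext; rewrite /= mul1r. Qed.
Let sub_mulr1 : right_id sub_one sub_mul.
Proof. by move=> *; apply: subalg_ext; rewrite /= mulr1. Qed.
Let sub_mulDl : left_distributive sub_mul sub_add.
Proof. by move=> *; apply: subalg_ext; rewrite /= mulrDl. Qed.
Let sub_mulDr : right_distributive sub_mul sub_add.
Proof. by move=> *; apply: subalg_ext; rewrite /= mulrDr. Qed.
Let sub_one_neq0 : sub_one != 0.
Proof. by apply/eqP=> /(congr1 sval) /= /eqP; rewrite oner_eq0. Qed.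
HB.instance Definition _ := GRing.Zmodule_isNzRing.Build U
  sub_mulA sub_mul1 sub_mulr1 sub_mulDl sub_mulDr sub_one_neq0.

Let sub_scaleA a b v : sub_scale a (sub_scale b v) = sub_scale (a * b) v.
Proof. by apply: subalg_ext; rewrite /= scalerA. Qed.
Let sub_scale1 : left_id 1 sub_scale.
Proof. by move=> *; apply: subalg_ext; rewrite /= scale1r. Qed.
Let sub_scaleDr : right_distributive sub_scale sub_add.
Proof. by move=> *; apply: subalg_ext; rewrite /= scalerDr. Qed.
Let sub_scaleDl v : {morph sub_scale^~ v : a b / a + b >-> sub_add a b}.
Proof. by move=> *; apply: subalg_ext; rewrite /= scalerDl. Qed.
HB.instance Definition _ := GRing.Zmodule_isLmodule.Build K U
  sub_scaleA sub_scale1 sub_scaleDr sub_scaleDl.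

Let sub_scaleAl a (u v : U) : a *: (u * v) = (a *: u) * v.
Proof. by apply: subalg_ext; rewrite /= scalerAl. Qed.
HB.instance Definition _ := GRing.Lmodule_isLalgebra.Build K U sub_scaleAl.
Let sub_scaleAr a (u v : U) : a *: (u * v) = u * (a *: v).
Proof. by apply: subalg_ext; rewrite /= scalerAr. Qed.
HB.instance Definition _ := GRing.Lalgebra_isAlgebra.Build K U sub_scaleAr.

Lemma sval_alg_morph : alg_morph (fun u : U => sval u).
Proof. by []. Qed.
End PropSubalgebra.

(* The shift operators on the sequence space K^N: the algebra of linear
   endomorphisms of K^N contains the right shift [shift_r] and the left
   shift [shift_l] with shift_l * shift_r = 1 but shift_r * shift_l <> 1.
   This witnesses that the relation yx = 1 of S_1 does not force xy = 1. *)
Section ShiftModel.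
Variable K : fieldType.

Definition is_linear_op (f : (nat -> K) -> nat -> K) :=
  (forall u v, f (fun n => u n + v n) = fun n => f u n + f v n) /\
  (forall k u, f (fun n => k * u n) = fun n => k * f u n).

Record linop := LinOp { linop_fun :> (nat -> K) -> nat -> K; linop_lin : is_linear_op linop_fun }.

HB.instance Definition _ := gen_eqMixin linop.
HB.instance Definition _ := gen_choiceMixin linop.

Lemma linop_ext (f g : linop) : (forall u n, f u n = g u n) -> f = g.
Proof.
case: f g => f fl [g gl] /= fg.
have {fg} fg : f = g by apply/funext => u; apply/funext => n; apply: fg.
by subst g; congr LinOp; apply: Prop_irrelevance.
Qed.

Lemma linopD (f : linop) u v : f (fun n => u n + v n) = fun n => f u n + f v n.
Proof. exact: (proj1 (linop_lin f)). Qed.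
Lemma linopZ (f : linop) k u : f (fun n => k * u n) = fun n => k * f u n.
Proof. exact: (proj2 (linop_lin f)). Qed.

Definition linop_zero : linop.
Proof. by exists (fun _ _ => 0); split=> *; apply/funext => n; rewrite ?addr0 ?mulr0. Defined.
Definition linop_add (f g : linop) : linop.
Proof.
exists (fun u n => f u n + g u n); split=> *; rewrite ?linopD ?linopZ; apply/funext => n.
  by rewrite addrACA.
by rewrite mulrDr.
Defined.
Definition linop_opp (f : linop) : linop.
Proof.
exists (fun u n => - f u n); split=> *; rewrite ?linopD ?linopZ; apply/funext => n.
  by rewrite opprD.
by rewrite mulrN.
Defined.
Definition linop_mul (f g : linop) : linop.
Proof. by exists (fun u => f (g u)); split=> *; rewrite ?linopD ?linopZ. Defined.
Definition linop_one : linop.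
Proof. by exists id. Defined.
Definition linop_scale (k : K) (f : linop) : linop.
Proof.
exists (fun u n => k * f u n); split=> *; rewrite ?linopD ?linopZ; apply/funext => n.
  by rewrite mulrDr.
by rewrite mulrCA.
Defined.

Let linop_addA : associative linop_add.
Proof. by move=> *; apply: linop_ext => * /=; rewrite addrA. Qed.
Let linop_addC : commutative linop_add.
Proof. by move=> *; apply: linop_ext => * /=; rewrite addrC. Qed.
Let linop_add0 : left_id linop_zero linop_add.
Proof. by move=> *; apply: linop_ext => * /=; rewrite add0r. Qed.
Let linop_addN : left_inverse linop_zero linop_opp linop_add.
Proof. by move=> *; apply: linop_ext => * /=; rewrite addNr. Qed.
HB.instance Definition _ :=
  GRing.isZmodule.Build linop linop_addA linop_addC linop_add0 linop_addN.

Let linop_mulA : associative linop_mul. Proof. by move=> *; apply: linop_ext. Qed.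
Let linop_mul1 : left_id linop_one linop_mul. Proof. by move=> *; apply: linop_ext. Qed.
Let linop_mulr1 : right_id linop_one linop_mul. Proof. by move=> *; apply: linop_ext. Qed.
Let linop_mulDl : left_distributive linop_mul linop_add.
Proof. by move=> *; apply: linop_ext. Qed.
Let linop_mulDr : right_distributive linop_mul linop_add.
Proof. by move=> f g h; apply: linop_ext => u n /=; rewrite linopD. Qed.
Let linop_one_neq0 : linop_one != 0.
Proof. by apply/eqP => /(congr1 (fun f : linop => f (fun=> 1) 0%N)) /eqP; rewrite oner_eq0. Qed.
HB.instance Definition _ := GRing.Zmodule_isNzRing.Build linop
  linop_mulA linop_mul1 linop_mulr1 linop_mulDl linop_mulDr linop_one_neq0.

Let linop_scaleA a b v : linop_scale a (linop_scale b v) = linop_scale (a * b) v.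
Proof. by apply: linop_ext => * /=; rewrite mulrA. Qed.
Let linop_scale1 : left_id 1 linop_scale.
Proof. by move=> *; apply: linop_ext => * /=; rewrite mul1r. Qed.
Let linop_scaleDr : right_distributive linop_scale linop_add.
Proof. by move=> *; apply: linop_ext => * /=; rewrite mulrDr. Qed.
Let linop_scaleDl v : {morph linop_scale^~ v : a b / a + b >-> linop_add a b}.
Proof. by move=> *; apply: linop_ext => * /=; rewrite mulrDl. Qed.
HB.instance Definition _ := GRing.Zmodule_isLmodule.Build K linop
  linop_scaleA linop_scale1 linop_scaleDr linop_scaleDl.

Let linop_scaleAl a (u v : linop) : a *: (u * v) = (a *: u) * v.
Proof. by apply: linop_ext. Qed.
HB.instance Definition _ := GRing.Lmodule_isLalgebra.Build K linop linop_scaleAl.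
Let linop_scaleAr a (u v : linop) : a *: (u * v) = u * (a *: v).
Proof. by apply: linop_ext => w n /=; rewrite linopZ. Qed.
HB.instance Definition _ := GRing.Lalgebra_isAlgebra.Build K linop linop_scaleAr.

Definition shift_r : linop.
Proof.
exists (fun u n => if n is m.+1 then u m else 0).
by split=> *; apply/funext => -[|m]; rewrite ?addr0 ?mulr0.
Defined.
Definition shift_l : linop.
Proof. by exists (fun u n => u n.+1). Defined.

Lemma shift_lr : shift_l * shift_r = 1. Proof. by apply: linop_ext. Qed.
Lemma shift_rl_neq1 : shift_r * shift_l != 1.
Proof.
by apply/eqP => /(congr1 (fun f : linop => f (fun=> 1) 0%N)) /eqP; rewrite eq_sym oner_eq0.
Qed.
End ShiftModel.

Section RelationYX.
Variables (K : fieldType) (A : algType K) (x y : A).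
Hypothesis yx : y * x = 1.

Lemma yX_xXD j k : y ^+ j * x ^+ (j + k) = x ^+ k.
Proof.
elim: j => [|j IH]; first by rewrite expr0 mul1r.
by rewrite addSn exprSr exprS -mulrA (mulrA y) yx mul1r IH.
Qed.

Lemma yXD_xX j k : y ^+ (j + k) * x ^+ j = y ^+ k.
Proof.
elim: j => [|j IH]; first by rewrite expr0 mulr1 add0n.
by rewrite addSn (exprSr y) (exprS x) -mulrA (mulrA y) yx mul1r IH.
Qed.

Lemma yX_xX j k :
  y ^+ j * x ^+ k = if (j <= k)%N then x ^+ (k - j) else y ^+ (j - k).
Proof.
case: leqP => jk; first by rewrite -{1}(subnKC jk) yX_xXD.
by rewrite -{1}(subnKC (ltnW jk)) yXD_xX.
Qed.

Lemma yX_xXnn j : y ^+ j * x ^+ j = 1.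
Proof. by rewrite -{2}(addn0 j) yX_xXD expr0. Qed.

Fact idem_key : unit. Proof. exact: tt. Qed.
Definition idem : A := locked_with idem_key (1 - x * y).
Lemma idemE : idem = 1 - x * y. Proof. by rewrite /idem unlock. Qed.

Lemma y_idem : y * idem = 0.
Proof. by rewrite idemE mulrBr mulr1 mulrA yx mul1r subrr. Qed.
Lemma idem_x : idem * x = 0.
Proof. by rewrite idemE mulrBl mul1r -mulrA yx mulr1 subrr. Qed.
Lemma idem_idem : idem * idem = idem.
Proof. by rewrite {1}idemE mulrBl mul1r -mulrA y_idem mulr0 subr0. Qed.
Lemma yXS_idem n : y ^+ n.+1 * idem = 0.
Proof. by rewrite exprSr -mulrA y_idem mulr0. Qed.
Lemma idem_xXS n : idem * x ^+ n.+1 = 0.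
Proof. by rewrite exprS mulrA idem_x mul0r. Qed.

Lemma idem_yX_xX_idem m k :
  idem * (y ^+ m * x ^+ k) * idem = if m == k then idem else 0.
Proof.
rewrite yX_xX; case: (ltngtP m k) => mk.
- by rewrite -(subnSK mk) idem_xXS !mul0r.
- by rewrite -(subnSK mk) -mulrA yXS_idem mulr0.
- by rewrite mk subnn expr0 mulr1 idem_idem.
Qed.

Definition munit r l := x ^+ r * idem * y ^+ l.

Lemma munitM r l r' l' : munit r l * munit r' l' = if l == r' then munit r l' else 0.
Proof.
have -> : munit r l * munit r' l' = x ^+ r * (idem * (y ^+ l * x ^+ r') * idem) * y ^+ l'.
  by rewrite /munit !mulrA.
by rewrite idem_yX_xX_idem; case: eqP => _; rewrite ?mulr0 ?mul0r // /munit mulrA.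
Qed.

Fact trunc_key : unit. Proof. exact: tt. Qed.
Definition trunc n : A := locked_with trunc_key (1 - x ^+ n * y ^+ n).
Lemma truncE n : trunc n = 1 - x ^+ n * y ^+ n. Proof. by rewrite /trunc unlock. Qed.

Lemma trunc_sum n : trunc n = \sum_(r < n) munit r r.
Proof.
elim: n => [|n IH]; first by rewrite truncE big_ord0 !expr0 mulr1 subrr.
rewrite big_ord_recr /= -IH !truncE /munit idemE mulrBr mulr1 mulrBl.
have -> : x ^+ n * (x * y) * y ^+ n = x ^+ n.+1 * y ^+ n.+1.
  by rewrite (exprSr x) (exprS y) !mulrA.
by rewrite addrA addrNK.
Qed.

Lemma truncM m n : trunc m * trunc n = trunc (minn m n).
Proof.
rewrite !truncE mulrBr mulr1 !mulrBl mul1r.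
have -> : x ^+ m * y ^+ m * (x ^+ n * y ^+ n) = x ^+ m * (y ^+ m * x ^+ n) * y ^+ n.
  by rewrite !mulrA.
rewrite yX_xX; case: leqP => mn; first by rewrite -exprD subnKC // subrr subr0.
by rewrite -mulrA -exprD subnK ?(ltnW mn) // opprB addrA subrK.
Qed.

Lemma trunc_xX_idem n l : trunc n * (x ^+ l * idem) = if (l < n)%N then x ^+ l * idem else 0.
Proof.
rewrite truncE mulrBl mul1r.
have -> : x ^+ n * y ^+ n * (x ^+ l * idem) = x ^+ n * (y ^+ n * x ^+ l) * idem.
  by rewrite !mulrA.
rewrite yX_xX; case: leqP => nl; first by rewrite -exprD subnKC // subrr.
by rewrite -(subnSK nl) -(mulrA (x ^+ n)) yXS_idem mulr0 subr0.
Qed.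

Definition mon i j := x ^+ i * y ^+ j.

Lemma monM i j k l :
  mon i j * mon k l = if (j <= k)%N then mon (i + (k - j)) l else mon i (j - k + l).
Proof.
have -> : mon i j * mon k l = x ^+ i * (y ^+ j * x ^+ k) * y ^+ l by rewrite /mon !mulrA.
by rewrite yX_xX; case: leqP => _; [rewrite -exprD | rewrite -mulrA -exprD].
Qed.

Definition comb (s : seq (K * nat * nat)) : A := \sum_(t <- s) t.1.1 *: mon t.1.2 t.2.

Lemma comb_nil : comb [::] = 0. Proof. by rewrite /comb big_nil. Qed.
Lemma comb_cons t s : comb (t :: s) = t.1.1 *: mon t.1.2 t.2 + comb s.
Proof. by rewrite /comb big_cons. Qed.
Lemma comb_cat s1 s2 : comb (s1 ++ s2) = comb s1 + comb s2.
Proof. by rewrite /comb big_cat. Qed.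

Definition spanned (z : A) := exists s, z = comb s.

Lemma spanned_mon c i j : spanned (c *: mon i j).
Proof. by exists [:: (c, i, j)]; rewrite comb_cons comb_nil addr0. Qed.
Lemma spannedD u v : spanned u -> spanned v -> spanned (u + v).
Proof. by move=> [s1 ->] [s2 ->]; exists (s1 ++ s2); rewrite comb_cat. Qed.
Lemma spanned_sum (I : Type) (r : seq I) (F : I -> A) :
  (forall i, spanned (F i)) -> spanned (\sum_(i <- r) F i).
Proof.
by move=> FS; apply: big_ind => //; [exists [::]; rewrite comb_nil | apply: spannedD].
Qed.
Lemma spannedZ c u : spanned u -> spanned (c *: u).
Proof.
move=> [s ->]; rewrite /comb scaler_sumr; apply: spanned_sum => t.
by rewrite scalerA; apply: spanned_mon.
Qed.
Lemma spannedM u v : spanned u -> spanned v -> spanned (u * v).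
Proof.
move=> [s1 ->] [s2 ->]; rewrite /comb mulr_suml; apply: spanned_sum => t.
rewrite mulr_sumr; apply: spanned_sum => w.
by rewrite -scalerAl -scalerAr scalerA monM; case: ifP => _; apply: spanned_mon.
Qed.

Lemma spanned_monomial i j : spanned (mon i j).
Proof. by rewrite -[mon i j]scale1r; apply: spanned_mon. Qed.
Lemma spanned1 : spanned 1.
Proof. by have := spanned_monomial 0 0; rewrite /mon !expr0 mulr1. Qed.

Definition spanned_subalg : subalg_pred spanned :=
  SubalgPred spanned1 spannedD spannedM spannedZ.

Lemma mon_xX_idem i j n :
  mon i j * x ^+ n * idem = if (j <= n)%N then x ^+ (i + (n - j)) * idem else 0.
Proof.
rewrite /mon -(mulrA (x ^+ i)) yX_xX; case: leqP => jn; first by rewrite -exprD.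
by rewrite -(subnSK jn) -!mulrA yXS_idem !mulr0.
Qed.

Lemma corner_mon m i j n : idem * y ^+ m * mon i j * x ^+ n * idem =
  if (j <= n)%N && (m == i + (n - j))%N then idem else 0.
Proof.
have -> : idem * y ^+ m * mon i j * x ^+ n * idem = idem * y ^+ m * (mon i j * x ^+ n * idem).
  by rewrite !mulrA.
rewrite mon_xX_idem; case: leqP => jn /=; last by rewrite !mulr0.
by rewrite !mulrA -(mulrA idem) idem_yX_xX_idem.
Qed.

Definition corner_term (t : K * nat * nat) (m n : nat) : K :=
  if (t.2 <= n)%N && (m == t.1.2 + (n - t.2))%N then t.1.1 else 0.
Definition corner_coef s m n : K := \sum_(t <- s) corner_term t m n.

Lemma cornerE s m n : idem * y ^+ m * comb s * x ^+ n * idem = corner_coef s m n *: idem.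
Proof.
elim: s => [|t s IH]; first by rewrite comb_nil /corner_coef big_nil mulr0 !mul0r scale0r.
rewrite comb_cons /corner_coef big_cons mulrDr !mulrDl IH scalerDl; congr (_ + _).
rewrite -scalerAr -!scalerAl corner_mon /corner_term.
by case: ifP => _; rewrite ?scaler0 ?scale0r.
Qed.

(* The coefficient of x^m y^n in comb s is the difference of two consecutive
   corner coefficients along a diagonal; hence the corners determine the element. *)
Definition prev_corner_coef s m n : K :=
  if (0 < m)%N && (0 < n)%N then corner_coef s m.-1 n.-1 else 0.

Lemma corner_term_diff t m n :
  corner_term t m n - (if (0 < m)%N && (0 < n)%N then corner_term t m.-1 n.-1 else 0) =
  if (m == t.1.2) && (n == t.2) then t.1.1 else 0.
Proof.
case: t => [[c i] j]; rewrite /corner_term /=.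
by repeat case: ifP => ?; rewrite ?subrr ?subr0 //; lia.
Qed.

Definition bounded N (s : seq (K * nat * nat)) := all (fun t => (t.1.2 < N) && (t.2 < N))%N s.

Lemma comb_decomp N s : bounded N s ->
  comb s = \sum_(i < N) \sum_(j < N) (corner_coef s i j - prev_corner_coef s i j) *: mon i j.
Proof.
elim: s => [|t s IH].
  by rewrite comb_nil; symmetry; apply: big1 => i _; apply: big1 => j _;
    rewrite /prev_corner_coef /corner_coef !big_nil if_same subrr scale0r.
rewrite /bounded /= => /andP [/andP [iN jN] sN]; rewrite comb_cons IH //.
have coef_cons i j : corner_coef (t :: s) i j - prev_corner_coef (t :: s) i j =
    (if (i == t.1.2) && (j == t.2) then t.1.1 else 0)
    + (corner_coef s i j - prev_corner_coef s i j).
  rewrite -corner_term_diff /prev_corner_coef /corner_coef big_cons.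
  by case: ifP => _; rewrite ?big_cons ?subr0 // opprD addrACA.
under eq_bigr do under eq_bigr do rewrite coef_cons scalerDl.
under eq_bigr do rewrite big_split /=.
rewrite big_split /=; congr (_ + _); symmetry.
rewrite (bigD1 (Ordinal iN)) //= [X in _ + X]big1 ?addr0; last first.
  move=> i /negbTE; rewrite -val_eqE /= => ->; apply: big1 => j _; by rewrite scale0r.
rewrite (bigD1 (Ordinal jN)) //= !eqxx [X in _ + X]big1 ?addr0 //.
by move=> j /negbTE; rewrite -val_eqE /= => ->; rewrite ?andbF scale0r.
Qed.

Lemma bounded_mono N N' s : bounded N s -> (N <= N')%N -> bounded N' s.
Proof.
move=> sN NN'; apply/allP => t ts; have /andP [iN jN] := allP sN t ts.
by rewrite (leq_trans iN NN') (leq_trans jN NN').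
Qed.

Lemma bounded_exists s : exists2 N, (0 < N)%N & bounded N s.
Proof.
elim: s => [|t s [N N0 sN]]; first by exists 1%N.
exists (maxn N (maxn t.1.2.+1 t.2.+1)); first by rewrite leq_max N0.
rewrite /bounded /= !leq_max !ltnSn !orbT /=.
by apply: (bounded_mono sN); rewrite leq_max leqnn.
Qed.

Lemma y_mon_xX_idem M i j l : (i + l < M)%N -> y ^+ M * (mon i j * x ^+ l * idem) = 0.
Proof.
move=> ilM; rewrite mon_xX_idem; case: leqP => jl; last by rewrite mulr0.
have iljM : (i + (l - j) < M)%N by apply: leq_ltn_trans ilM; rewrite leq_add2l leq_subr.
by rewrite mulrA yX_xX leqNgt iljM /= -(subnSK iljM) yXS_idem.
Qed.

(* If z has degree < N in x and y and z x^L = 0, then y^M z = 0 for M >= N + L: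
   z only involves the first N + L columns of the matrix units. *)
Lemma left_annihilator N L M s :
  bounded N s -> comb s * x ^+ L = 0 -> (N + L <= M)%N -> y ^+ M * comb s = 0.
Proof.
move=> sN sxL NLM.
have -> : comb s = comb s * trunc L by rewrite truncE mulrBr mulr1 mulrA sxL mul0r subr0.
rewrite trunc_sum !mulr_sumr big1 // => l _.
have -> : y ^+ M * (comb s * munit l l) = y ^+ M * (comb s * x ^+ l * idem) * y ^+ l.
  by rewrite /munit !mulrA.
rewrite /comb !mulr_suml mulr_sumr big1_seq ?mul0r // => t /andP [_ ts].
rewrite -!scalerAl -scalerAr y_mon_xX_idem ?scaler0 //.
have /andP [iN _] := allP sN t ts.
by rewrite (leq_trans _ NLM) // -addSn leq_add // ltnW.
Qed.

Lemma left_agree N L M s c i j : bounded N s -> (i < N)%N -> (j < N)%N ->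
  comb s * x ^+ L = c *: mon i j * x ^+ L -> (N + L <= M)%N ->
  y ^+ M * comb s = c *: (y ^+ M * mon i j).
Proof.
move=> sN iN jN sxL NLM; apply/eqP; rewrite scalerAr -subr_eq0 -mulrBr.
have -> : comb s - c *: mon i j = comb (s ++ [:: (- c, i, j)]).
  by rewrite comb_cat comb_cons comb_nil addr0 scaleNr.
apply/eqP; apply: (left_annihilator _ _ NLM).
  by rewrite /bounded all_cat; apply/andP; split; [exact: sN | rewrite /= iN jN].
by rewrite comb_cat comb_cons comb_nil addr0 mulrDl scaleNr mulNr sxL subrr.
Qed.

Lemma trunc_corner M z :
  y ^+ M * z = 0 -> z * x ^+ M = 0 -> trunc M * z * trunc M = z.
Proof.
move=> yz zx; rewrite truncE mulrBl mul1r -mulrA yz mulr0 subr0.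
by rewrite mulrBr mulr1 mulrA zx mul0r subr0.
Qed.

Lemma horner_x_expand (R : {poly K}) : horner_alg x R = \sum_(i < size R) R`_i *: x ^+ i.
Proof.
rewrite -{1}[R]coefK poly_def raddf_sum; apply: eq_bigr => i _.
rewrite /= linearZ /= rmorphXn mulr_algl; congr (_ *: (_ ^+ _)); exact: horner_algX.
Qed.

Definition right_poly (s : seq (K * nat * nat)) N : {poly K} :=
  \sum_(t <- s) t.1.1 *: 'X^(t.1.2 + (N - t.2)).

Lemma comb_xX_poly N s : bounded N s -> comb s * x ^+ N = horner_alg x (right_poly s N).
Proof.
elim: s => [|t s IH]; first by rewrite comb_nil mul0r /right_poly big_nil rmorph0.
rewrite /bounded /= => /andP [/andP [iN jN] sN].
rewrite comb_cons mulrDl IH // /right_poly big_cons rmorphD /=; congr (_ + _).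
rewrite linearZ /= rmorphXn mulr_algl -scalerAl /mon -mulrA yX_xX (ltnW jN) -exprD.
by congr (_ *: (_ ^+ _)); symmetry; exact: horner_algX.
Qed.

Lemma munit_corner s r l : munit r r * comb s * munit l l = corner_coef s r l *: munit r l.
Proof.
have -> : munit r r * comb s * munit l l =
    x ^+ r * (idem * y ^+ r * comb s * x ^+ l * idem) * y ^+ l by rewrite /munit !mulrA.
by rewrite cornerE -scalerAr -scalerAl.
Qed.

Lemma ord_val_eqF n (i j : 'I_n) : i != j -> (i == j :> nat) = false.
Proof. by move/negbTE. Qed.

Definition mx_embed M (C : 'M[K]_M) : A := \sum_(r < M) \sum_(l < M) C r l *: munit r l.

Lemma trunc_comb_trunc M s :
  trunc M * comb s * trunc M = mx_embed (\matrix_(r < M, l < M) corner_coef s r l).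
Proof.
rewrite trunc_sum !mulr_suml /mx_embed; apply: eq_bigr => r _.
by rewrite mulr_sumr; apply: eq_bigr => l _; rewrite munit_corner mxE.
Qed.

Lemma mx_embedD M (C D : 'M[K]_M) : mx_embed (C + D) = mx_embed C + mx_embed D.
Proof.
rewrite /mx_embed -big_split; apply: eq_bigr => r _.
by rewrite -big_split; apply: eq_bigr => l _; rewrite mxE scalerDl.
Qed.

Lemma mx_embedZ M c (C : 'M[K]_M) : mx_embed (c *: C) = c *: mx_embed C.
Proof.
rewrite /mx_embed scaler_sumr; apply: eq_bigr => r _.
by rewrite scaler_sumr; apply: eq_bigr => l _; rewrite mxE scalerA.
Qed.

Lemma mx_embed0 M : mx_embed (0 : 'M[K]_M) = 0.
Proof. by rewrite -(scale0r 0) mx_embedZ scale0r. Qed.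

Lemma mx_embedN M (C : 'M[K]_M) : mx_embed (- C) = - mx_embed C.
Proof. by rewrite -scaleN1r mx_embedZ scaleN1r. Qed.

Lemma mx_embedM M (C D : 'M[K]_M) : mx_embed C * mx_embed D = mx_embed (C *m D).
Proof.
rewrite /mx_embed mulr_suml; apply: eq_bigr => r _; rewrite mulr_suml.
transitivity (\sum_(l < M) \sum_(l' < M) (C r l * D l l') *: munit r l').
  apply: eq_bigr => l _; rewrite mulr_sumr (bigD1 l) //= [X in _ + X]big1 ?addr0.
    rewrite mulr_sumr; apply: eq_bigr => l' _.
    by rewrite -scalerAr -scalerAl munitM eqxx scalerA mulrC.
  move=> r' r'l; rewrite mulr_sumr; apply: big1 => l' _.
  by rewrite -scalerAr -scalerAl munitM eq_sym (ord_val_eqF r'l) !scaler0.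
by rewrite exchange_big; apply: eq_bigr => l' _; rewrite mxE scaler_suml.
Qed.

Lemma mx_embed1 M : mx_embed (1%:M : 'M[K]_M) = trunc M.
Proof.
rewrite trunc_sum /mx_embed; apply: eq_bigr => r _.
rewrite (bigD1 r) //= [X in _ + X]big1 ?addr0; first by rewrite mxE eqxx scale1r.
by move=> l rl; rewrite mxE eq_sym (negPf rl) scale0r.
Qed.

(* From here on idem <> 0, as in S_1: the matrix units are then nonzero,
   and each corner trunc M * A * trunc M is a faithful copy of the M x M
   matrices. *)
Hypothesis idem_neq0 : idem != 0.

Lemma munit_neq0 r l : munit r l != 0.
Proof.
apply: contra idem_neq0 => /eqP rl0; apply/eqP.
have <- : y ^+ r * munit r l * x ^+ l = idem.
  by rewrite /munit !mulrA yX_xXnn mul1r -mulrA yX_xXnn mulr1.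
by rewrite rl0 mulr0 mul0r.
Qed.

(* The entries of C are read off by the diagonal matrix units, so the
   embedding is injective. *)
Lemma munit_mx_embed M (C : 'M[K]_M) (r l : 'I_M) :
  munit r r * mx_embed C * munit l l = C r l *: munit r l.
Proof.
rewrite /mx_embed mulr_sumr mulr_suml (bigD1 r) //= [X in _ + X]big1 ?addr0; last first.
  move=> r' r'r; rewrite mulr_sumr mulr_suml big1 // => l' _.
  by rewrite -scalerAr -scalerAl munitM eq_sym (ord_val_eqF r'r) mul0r scaler0.
rewrite mulr_sumr mulr_suml (bigD1 l) //= [X in _ + X]big1 ?addr0; last first.
  move=> l' l'l.
  by rewrite -scalerAr -scalerAl munitM eqxx munitM (ord_val_eqF l'l) scaler0.
by rewrite -scalerAr -scalerAl munitM eqxx munitM eqxx.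
Qed.

Lemma mx_embed_inj M : injective (@mx_embed M).
Proof.
move=> C D CD; apply/matrixP => r l; apply/eqP; rewrite -subr_eq0; apply/eqP.
have := munit_mx_embed (C - D) r l.
rewrite mx_embedD mx_embedN CD subrr mulr0 mul0r !mxE => /esym/eqP.
by rewrite scaler_eq0 (negPf (munit_neq0 _ _)) orbF => /eqP.
Qed.

(* x is transcendental: idem y^m p(x) idem is the m-th coefficient of p times idem. *)
Lemma horner_x_eq0 (R : {poly K}) : horner_alg x R = 0 -> R = 0.
Proof.
move=> R0; apply/polyP => m; rewrite coef0.
have : idem * y ^+ m * horner_alg x R * idem = 0 by rewrite R0 mulr0 mul0r.
rewrite horner_x_expand mulr_sumr mulr_suml.
under eq_bigr do rewrite -scalerAr -scalerAl -(mulrA idem) idem_yX_xX_idem.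
case: (ltnP m (size R)) => mR; last by rewrite nth_default.
rewrite (bigD1 (Ordinal mR)) //= eqxx big1 ?addr0.
  by move/eqP; rewrite scaler_eq0 (negPf idem_neq0) orbF => /eqP.
by move=> i /ord_val_eqF; rewrite eq_sym => ->; rewrite scaler0.
Qed.

(* Corners are matrix algebras, hence Dedekind-finite. *)
Lemma corner_dedekind_finite M u v : spanned u -> spanned v ->
  (trunc M * u * trunc M) * (trunc M * v * trunc M) = trunc M ->
  (trunc M * v * trunc M) * (trunc M * u * trunc M) = trunc M.
Proof.
move=> [su ->] [sv ->]; rewrite !trunc_comb_trunc !mx_embedM -mx_embed1.
by move/mx_embed_inj/mulmx1C ->.
Qed.

Lemma trunc_neq M k : (0 < k <= M)%N -> trunc (M - k) != trunc M.
Proof.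
move=> kM; apply/eqP => /(congr1 (fun t => t * (x ^+ M.-1 * idem))) /=.
rewrite !trunc_xX_idem ifN ?ifT; try lia.
by move/esym/eqP; rewrite -[_ * idem]mulr1 -(expr0 y) (negPf (munit_neq0 _ _)).
Qed.

(* Cayley-Hamilton, in the form of a relation without constant term. *)
Lemma mx_pow_relation n (C : 'M[K]_n.+1) :
  C ^+ n.+2 = \sum_(i < n.+1) (- (char_poly C)`_i) *: C ^+ i.+1.
Proof.
have horner_sum (q : {poly K}) : horner_mx C q = \sum_(i < size q) q`_i *: C ^+ i.
  rewrite -{1}[q]coefK poly_def rmorph_sum /=; apply: eq_bigr => i _.
  by rewrite -mul_polyC rmorphM /= horner_mx_C rmorphXn /= horner_mx_X -mul_scalar_mx mulmxE.
have := Cayley_Hamilton C; rewrite horner_sum size_char_poly big_ord_recr /= => CH.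
have lc : (char_poly C)`_n.+1 = 1.
  by have := char_poly_monic C; rewrite monicE /lead_coef size_char_poly => /eqP.
move/eqP: CH; rewrite lc scale1r addrC addr_eq0 => /eqP Cn1.
rewrite exprSr Cn1 mulNr mulr_suml -sumrN; apply: eq_bigr => i _.
by rewrite -scalerAl -exprSr scaleNr.
Qed.

Lemma corner_algebraic M z : spanned z -> trunc M * z * trunc M = z ->
  exists D (d : 'I_D -> K), z ^+ D.+1 = \sum_(i < D) d i *: z ^+ i.+1.
Proof.
move=> [s ->]; case: M => [|M].
  rewrite truncE !expr0 mulr1 subrr mulr0 => <-.
  by exists 0%N, (fun=> 0); rewrite big_ord0 expr0n.
rewrite trunc_comb_trunc => <-; set C := \matrix_(_, _) _.
have embedX n : mx_embed C ^+ n.+1 = mx_embed (C ^+ n.+1).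
  elim: n => [|n IH]; first by rewrite !expr1.
  by rewrite exprSr IH mx_embedM mulmxE -exprSr.
exists M.+1, (fun i => - (char_poly C)`_i).
rewrite embedX mx_pow_relation (big_morph _ (@mx_embedD _) (mx_embed0 _)).
by apply: eq_bigr => i _; rewrite mx_embedZ embedX.
Qed.

(* If b a = 1 with a, b of degree < N, then a x^N and b x^N are scalar
   multiples of powers of x with exponents adding up to 2N: the polynomials
   they define multiply to X^(2N). *)
Lemma unit_xX_monomial N sa sb : bounded N sa -> bounded N sb ->
  comb sb * comb sa = 1 ->
  exists2 lam : K, lam != 0 & exists2 k, (k <= N + N)%N &
    comb sa * x ^+ N = lam *: x ^+ k /\ comb sb * x ^+ N = lam^-1 *: x ^+ (N + N - k).
Proof.
move=> saN sbN ba; set P := right_poly sa N; set Q := right_poly sb N.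
have hxXn n : horner_alg x 'X^n = x ^+ n by rewrite rmorphXn /= horner_algX.
have hxZ c p : horner_alg x (c *: p) = c *: horner_alg x p by rewrite linearZ /= mulr_algl.
have QP : Q * P = 'X^(N + N).
  apply: subr0_eq; apply: horner_x_eq0.
  rewrite rmorphB rmorphM /= hxXn -!comb_xX_poly // -mulrA.
  have -> : x ^+ N * (comb sa * x ^+ N) = comb sa * x ^+ N * x ^+ N.
    by rewrite comb_xX_poly // -hxXn -!rmorphM mulrC.
  by rewrite !mulrA ba mul1r -exprD subrr.
have : P %| ('X - 0%:P) ^+ (N + N) by rewrite polyC0 subr0 -QP dvdp_mulIr.
case/dvdp_exp_XsubCP => k kN; rewrite polyC0 subr0 => /eqpP [[c1 c2] /andP [c10 c20] /= Pk].
pose lam := c1^-1 * c2.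
have lam0 : lam != 0 by rewrite mulf_neq0 // invr_neq0.
have PE : P = lam *: 'X^k by rewrite /lam -scalerA -Pk scalerA mulVf // scale1r.
have QE : Q = lam^-1 *: 'X^(N + N - k).
  apply: (@mulIf _ 'X^k); first by rewrite expf_neq0 // polyX_eq0.
  by rewrite -scalerAl -exprD subnK // -QP PE -scalerAr scalerA mulVf // scale1r.
exists lam => //; exists k => //.
by rewrite !comb_xX_poly // -/P -/Q PE QE !hxZ !hxXn.
Qed.

(* A unit cannot shift high powers of x by k > 0: it would induce, in a
   large corner, matrices with C D = 1 but D C = trunc (M - k) <> 1.  This is
   the Fredholm index argument. *)
Lemma unit_no_shift N sa sb mu k : bounded N sa -> bounded N sb ->
  comb sa * comb sb = 1 -> comb sb * comb sa = 1 -> mu != 0 -> (0 < k <= N)%N ->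
  comb sa * x ^+ N = mu *: x ^+ (N + k) -> comb sb * x ^+ N = mu^-1 *: x ^+ (N - k) ->
  False.
Proof.
move=> saN sbN ab ba mu0 kN aN bN; set a := comb sa in ab ba aN; set b := comb sb in ab ba bN.
pose N' := (N + k.+1)%N; pose M := (N' + N)%N.
have saN' : bounded N' sa by apply: bounded_mono saN _; rewrite leq_addr.
have sbN' : bounded N' sb by apply: bounded_mono sbN _; rewrite leq_addr.
have ya : y ^+ M * a = mu *: y ^+ (M - k).
  rewrite (left_agree (c := mu) (i := k) (j := 0) saN' _ _ _ (leqnn M)) ?/N'; try lia.
    by rewrite /mon expr0 mulr1 yX_xX ifN //; lia.
  by rewrite aN /mon expr0 mulr1 -scalerAl -exprD addnC.
have yb : y ^+ M * b = mu^-1 *: y ^+ (M + k).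
  rewrite (left_agree (c := mu^-1) (i := 0) (j := k) sbN' _ _ _ (leqnn M)) ?/N'; try lia.
    by rewrite /mon expr0 mul1r -exprD.
  by rewrite bN /mon expr0 mul1r -scalerAl yX_xX ifT //; lia.
have xM : x ^+ M = x ^+ N * x ^+ (M - N) by rewrite -exprD subnKC // leq_addl.
have aM : a * x ^+ M = mu *: x ^+ (M + k).
  by rewrite xM mulrA aN -scalerAl -exprD; congr (_ *: _ ^+ _); lia.
have bM : b * x ^+ M = mu^-1 *: x ^+ (M - k).
  by rewrite xM mulrA bN -scalerAl -exprD; congr (_ *: _ ^+ _); lia.
have corner_mul u v : (trunc M * u * trunc M) * (trunc M * v * trunc M) =
    trunc M * (u * trunc M * v) * trunc M.
  by rewrite -!mulrA (mulrA (trunc M) (trunc M)) truncM minnn !mulrA.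
have ab_trunc : a * trunc M * b = trunc (M + k).
  rewrite !truncE mulrBr mulr1 mulrBl ab !mulrA -(mulrA _ (y ^+ M)) aM yb.
  by rewrite -scalerAl -scalerAr scalerA mulfV // scale1r.
have ba_trunc : b * trunc M * a = trunc (M - k).
  rewrite !truncE mulrBr mulr1 mulrBl ba !mulrA -(mulrA _ (y ^+ M)) bM ya.
  by rewrite -scalerAl -scalerAr scalerA mulVf // scale1r.
have tMt n : trunc M * trunc n * trunc M = trunc (minn n M).
  by rewrite !truncM minnAC minnn minnC.
have := @corner_dedekind_finite M a b (ex_intro _ sa erefl) (ex_intro _ sb erefl).
rewrite !corner_mul ab_trunc ba_trunc !tMt (minn_idPr (leq_addr k M)).
rewrite (minn_idPl (leq_subr k M)) => /(_ erefl) /eqP.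
by apply/negP/trunc_neq; lia.
Qed.

(* Every unit a of S_1 is a scalar lam plus an element satisfying a relation
   without constant term: by the two previous lemmas, (a - lam) x^N = 0 for
   large N, so a - lam lies in a corner. *)
Lemma unit_algebraic a b : spanned a -> spanned b -> a * b = 1 -> b * a = 1 ->
  exists lam D (d : 'I_D -> K),
    (a - lam%:A) ^+ D.+1 = \sum_(i < D) d i *: (a - lam%:A) ^+ i.+1.
Proof.
move=> [sa ->] [sb ->] ab ba.
have [Na Na0 saNa] := bounded_exists sa; have [Nb _ sbNb] := bounded_exists sb.
pose N := maxn Na Nb.
have N0 : (0 < N)%N by rewrite leq_max Na0.
have saN : bounded N sa by apply: bounded_mono saNa _; rewrite leq_maxl.
have sbN : bounded N sb by apply: bounded_mono sbNb _; rewrite leq_maxr.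
have [lam lam0 [k kN [aN bN]]] := unit_xX_monomial saN sbN ba.
case: (ltngtP k N) => kN'.
- exfalso; apply: (unit_no_shift (k := N - k) sbN saN ba ab (invr_neq0 lam0)); first lia.
    by rewrite bN; congr (_ *: _ ^+ _); lia.
  by rewrite aN invrK; congr (_ *: _ ^+ _); lia.
- exfalso; apply: (unit_no_shift (k := k - N) saN sbN ab ba lam0); first lia.
    by rewrite aN; congr (_ *: _ ^+ _); lia.
  by rewrite bN; congr (_ *: _ ^+ _); lia.
exists lam; apply: (corner_algebraic (M := N + N)).
  exists (sa ++ [:: (- lam, 0%N, 0%N)]).
  by rewrite comb_cat comb_cons comb_nil addr0 /mon !expr0 mulr1 scaleNr.
have aN' : comb sa * x ^+ N = lam%:A * x ^+ N by rewrite aN kN' mulr_algl.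
apply: trunc_corner; last by rewrite exprD mulrA mulrBl aN' subrr mul0r.
rewrite mulrBr (left_agree (c := lam) (i := 0) (j := 0) saN _ _ _ (leqnn _)) //.
  by rewrite /mon !expr0 !mulr1 mulr_algr subrr.
by rewrite aN' /mon !expr0 mulr1.
Qed.

Definition nilp M := x * trunc M.

Lemma trunc_x n : trunc n.+1 * x = x * trunc n.
Proof.
rewrite !truncE mulrBl mul1r mulrBr mulr1; congr (_ - _).
by rewrite (exprSr y) -!mulrA yx mulr1 exprS mulrA.
Qed.

Lemma nilpXS M k : (k <= M)%N -> nilp M ^+ k.+1 = x ^+ k.+1 * trunc (M - k).
Proof.
elim: k => [|k IH] kM; first by rewrite expr1 subn0.
rewrite exprSr IH ?(ltnW kM) // /nil -(subnSK kM) -mulrA (mulrA (trunc _)) trunc_x.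
by rewrite -mulrA truncM (minn_idPl (leq_subr _ _)) mulrA -exprSr.
Qed.

Lemma nilp_nilpotent M : nilp M ^+ M.+1 = 0.
Proof. by rewrite nilpXS // subnn truncE !expr0 mulr1 subrr mulr0. Qed.

Lemma nilpX_idem M k : (k <= M)%N -> nilp M ^+ k * idem = x ^+ k * idem.
Proof.
case: k => [|k] kM; first by rewrite !expr0.
have := trunc_xX_idem (M - k) 0; rewrite expr0 !mul1r subn_gt0 kM => trunc_idem.
by rewrite nilpXS 1?ltnW // -mulrA trunc_idem.
Qed.

Lemma nilp_powers_free M (c : 'I_M.+1 -> K) :
  \sum_(k < M.+1) c k *: nilp M ^+ k = 0 -> forall k, c k = 0.
Proof.
move=> c0 m.
have corner k : idem * y ^+ m * (c k *: nilp M ^+ k) * idem =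
    (if m == k :> nat then c k else 0) *: idem.
  rewrite -scalerAr -scalerAl -mulrA (@nilpX_idem M k (ltn_ord k)).
  by rewrite mulrA -(mulrA idem) idem_yX_xX_idem; case: eqP; rewrite ?scaler0 ?scale0r.
have : idem * y ^+ m * (\sum_(k < M.+1) c k *: nilp M ^+ k) * idem = 0.
  by rewrite c0 mulr0 mul0r.
rewrite mulr_sumr mulr_suml (eq_bigr _ (fun k _ => corner k)) -scaler_suml.
rewrite (bigD1 m) //= eqxx big1 ?addr0.
  by move/eqP; rewrite scaler_eq0 (negPf idem_neq0) orbF => /eqP.
by move=> k /ord_val_eqF; rewrite eq_sym => ->.
Qed.
End RelationYX.

Section FiniteSpan.
Variables (K : fieldType) (V : lmodType K).

Definition inspan n (v : 'I_n -> V) w := exists c : 'I_n -> K, w = \sum_(i < n) c i *: v i.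

Lemma inspan0 n (v : 'I_n -> V) : inspan v 0.
Proof. by exists (fun=> 0); rewrite big1 // => i _; rewrite scale0r. Qed.

Lemma inspanD n (v : 'I_n -> V) u w : inspan v u -> inspan v w -> inspan v (u + w).
Proof.
move=> [c ->] [e ->]; exists (fun i => c i + e i); rewrite -big_split.
by apply: eq_bigr => i _; rewrite scalerDl.
Qed.

Lemma inspanZ n (v : 'I_n -> V) a w : inspan v w -> inspan v (a *: w).
Proof.
move=> [c ->]; exists (fun i => a * c i); rewrite scaler_sumr.
by apply: eq_bigr => i _; rewrite scalerA.
Qed.

Lemma inspan_sum n (v : 'I_n -> V) (I : Type) (r : seq I) (F : I -> V) :
  (forall i, inspan v (F i)) -> inspan v (\sum_(i <- r) F i).
Proof. by move=> FS; apply: big_ind => //; [apply: inspan0 | apply: inspanD]. Qed.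

Lemma inspan_mem n (v : 'I_n -> V) i : inspan v (v i).
Proof.
exists (fun j => (j == i)%:R); rewrite (bigD1 i) //= eqxx scale1r big1 ?addr0 //.
by move=> j /negbTE ->; rewrite scale0r.
Qed.

Lemma inspan_trans n m (v : 'I_n -> V) (u : 'I_m -> V) w :
  (forall i, inspan v (u i)) -> inspan u w -> inspan v w.
Proof. by move=> uv [c ->]; apply: inspan_sum => i; apply: inspanZ. Qed.

(* Removing dependent vectors one at a time from a spanning family. *)
Lemma finite_span_dim (P : V -> Prop) n (v : 'I_n -> V) :
  (forall i, P (v i)) -> (forall w, P w -> inspan v w) -> exists d, has_dim P d.
Proof.
elim: n v => [|n IH] v Pv Pspan.
  by exists 0%N, v; split=> [//|w /Pspan //|c _ []].
have [free|] := pselect (forall c : 'I_n.+1 -> K,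
  \sum_(i < n.+1) c i *: v i = 0 -> forall i, c i = 0).
  by exists n.+1, v; split.
move=> /existsNP [c /not_implyP [c0 /existsNP [i0 /eqP ci0]]].
apply: (IH (fun j => v (lift i0 j))) => [j|w /Pspan [e ->]]; first exact: Pv.
have vi0 : v i0 = - (c i0)^-1 *: \sum_(j < n) c (lift i0 j) *: v (lift i0 j).
  move: c0; rewrite (bigD1_ord i0) //= => /eqP; rewrite addr_eq0 => /eqP ci0v.
  by rewrite scaleNr -scalerN -ci0v scalerA mulVf // scale1r.
rewrite (bigD1_ord i0) //= vi0 scalerA scaler_sumr -big_split /=.
exists (fun j => e i0 * - (c i0)^-1 * c (lift i0 j) + e (lift i0 j)).
by apply: eq_bigr => j _; rewrite scalerA scalerDl.
Qed.
End FiniteSpan.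

(* If t^(D+1) is a combination of t, ..., t^D, then 1, t, ..., t^D span a
   subalgebra: it contains every polynomial in t. *)
Section PowerSpan.
Variables (K : fieldType) (A : algType K) (t : A) (D : nat) (d : 'I_D -> K).
Hypothesis rel : t ^+ D.+1 = \sum_(i < D) d i *: t ^+ i.+1.
Local Notation powers := (fun i : 'I_D.+1 => t ^+ i).

Lemma powers_low k : (k <= D)%N -> inspan powers (t ^+ k).
Proof. by move=> kD; apply: (inspan_mem powers (Ordinal (kD : k < D.+1)%N)). Qed.

Lemma powers_lowS k : (k <= D)%N -> inspan powers (t ^+ k.+1).
Proof.
rewrite leq_eqVlt => /orP [/eqP ->|]; last exact: powers_low.
by rewrite rel; apply: inspan_sum => i; apply/inspanZ/powers_low.
Qed.

Lemma powers_mulr w : inspan powers w -> inspan powers (t * w).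
Proof.
move=> [c ->]; rewrite mulr_sumr; apply: inspan_sum => i.
by rewrite -scalerAr -exprS; apply/inspanZ/powers_lowS; rewrite -ltnS.
Qed.

Lemma powers_mul u w : inspan powers u -> inspan powers w -> inspan powers (u * w).
Proof.
move=> [c ->] Sw; rewrite mulr_suml; apply: inspan_sum => i; rewrite -scalerAl.
apply: inspanZ; elim: (nat_of_ord i) => [|k IH]; first by rewrite mul1r.
by rewrite exprS -mulrA; apply: powers_mulr.
Qed.

Lemma powers_one : inspan powers 1.
Proof. by have := powers_low (leq0n D); rewrite expr0. Qed.

Lemma powers_shift (lam : K) n : inspan powers ((t + lam%:A) ^+ n).
Proof.
elim: n => [|n IH]; first by rewrite expr0; apply: powers_one.
rewrite exprS mulrDl mulr_algl; apply: inspanD; [exact: powers_mulr | exact: inspanZ].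
Qed.
End PowerSpan.

Section Presentation.
Variables (K : fieldType) (A : algType K) (x y : A).
Hypothesis S1 : S1_presentation x y.

Let yx : y * x = 1 := proj1 S1.

(* The spanned elements form a subalgebra containing x and y; by the
   universal property it is all of S_1. *)
Lemma all_spanned z : spanned x y z.
Proof.
have [_ UP] := S1.
have Sx : spanned x y x by have := spanned_monomial x y 1 0; rewrite /mon expr1 expr0 mulr1.
have Sy : spanned x y y by have := spanned_monomial x y 0 1; rewrite /mon expr1 expr0 mul1r.
pose B := subalg_type (spanned_subalg yx).
pose xB : B := exist _ x Sx; pose yB : B := exist _ y Sy.
have yxB : yB * xB = 1 by apply: subalg_ext; rewrite /= yx.
have [[f [fM [fx fy]]] _] := UP B xB yB yxB.
have [_ UPuniq] := UP A x y yx.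
have := UPuniq _ _ (alg_morph_comp fM (sval_alg_morph _)) (alg_morph_id A) _ _ z.
by rewrite /= fx fy => /(_ erefl erefl) <-; apply: svalP.
Qed.

(* 1 - x y <> 0: the shift operators satisfy y x = 1 but not x y = 1. *)
Lemma idem_neq0 : idem x y != 0.
Proof.
have [[g [gM [gx gy]]] _] := (proj2 S1) _ _ _ (shift_lr K).
apply/eqP => /(congr1 g); rewrite (morph0 gM) idemE (morphB gM) (morph1 gM) (morphM gM) gx gy.
by move/eqP; rewrite subr_eq0 eq_sym (negPf (shift_rl_neq1 K)).
Qed.

Lemma morph_comb (B : algType K) (f : A -> B) s : alg_morph f ->
  f (comb x y s) = \sum_(t <- s) t.1.1 *: (f x ^+ t.1.2 * f y ^+ t.2).
Proof.
by move=> fM; rewrite (morph_sum fM); apply: eq_bigr => t _; rewrite (morphZ fM) (morphM fM) !(morphX fM).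
Qed.

(* If f does not kill idem, the corner coefficients of any element of the
   kernel vanish, so the element is zero. *)
Lemma injective_of_idem (f : A -> A) : alg_morph f -> f (idem x y) != 0 -> injective f.
Proof.
move=> fM fidem z1 z2 fz; apply/eqP; rewrite -subr_eq0.
have [s zs] := all_spanned (z1 - z2); have [N _ sN] := bounded_exists s.
have fz0 : f (z1 - z2) = 0 by rewrite (morphB fM) fz subrr.
have coef0 i j : corner_coef s i j = 0.
  have := cornerE yx s i j; rewrite -zs => /(congr1 f).
  rewrite !(morphM fM) fz0 mulr0 !mul0r (morphZ fM) => /esym/eqP.
  by rewrite scaler_eq0 (negPf fidem) orbF => /eqP.
rewrite zs (comb_decomp x y sN); apply/eqP/big1 => i _; apply: big1 => j _.
by rewrite /prev_corner_coef !coef0 if_same subrr scale0r.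
Qed.

(* If f kills idem, then a = f x and b = f y are commuting mutually inverse
   units; the image is spanned by the powers of a and b, hence is
   commutative, and finite dimensional because a and b are algebraic. *)
Lemma image_of_idem_killed (f : A -> A) : alg_morph f -> f (idem x y) = 0 ->
  (forall u v, f u * f v = f v * f u) /\ exists d, has_dim (image_of f) d.
Proof.
move=> fM fidem; set a := f x; set b := f y.
have ba : b * a = 1 by rewrite -(morphM fM) yx (morph1 fM).
have ab : a * b = 1.
  have xy : x * y = 1 - idem x y by rewrite idemE opprB addrC subrK.
  by rewrite -(morphM fM) xy (morphB fM) (morph1 fM) fidem subr0.
have comm_ab : GRing.comm a b by rewrite /GRing.comm ab ba.
have comm_image u : GRing.comm u a -> GRing.comm u b -> forall z, GRing.comm u (f z).
  move=> ua ub z; have [s ->] := all_spanned z; rewrite (morph_comb _ fM).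
  apply: commr_sum => t _; rewrite /GRing.comm -scalerAl -scalerAr; congr (_ *: _).
  by apply: commrM; apply: commrX.
have comm_a z : GRing.comm a (f z) by apply: (comm_image); [exact: commr_refl | exact: comm_ab].
have comm_b z : GRing.comm b (f z) by apply: (comm_image); [exact: commr_sym | exact: commr_refl].
split=> [u v|]; first by apply: comm_image; apply/commr_sym; [exact: comm_a | exact: comm_b].
have [lam1 [D1 [d1 rel1]]] := unit_algebraic yx idem_neq0 (all_spanned _) (all_spanned _) ab ba.
have [lam2 [D2 [d2 rel2]]] := unit_algebraic yx idem_neq0 (all_spanned _) (all_spanned _) ba ab.
set ta := a - lam1%:A in rel1; set tb := b - lam2%:A in rel2.
pose v (i : 'I_(D1.+1 + D2.+1)) := if (i < D1.+1)%N then ta ^+ i else tb ^+ (i - D1.+1).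
apply: (finite_span_dim (v := v)).
  move=> i; rewrite /v; case: ifP => _.
    by exists ((x - lam1%:A) ^+ i); rewrite (morphX fM) (morphB fM) (morph_scalar fM).
  by exists ((y - lam2%:A) ^+ (i - D1.+1)); rewrite (morphX fM) (morphB fM) (morph_scalar fM).
have va (i : 'I_D1.+1) : inspan v (ta ^+ i).
  have iD : (i < D1.+1 + D2.+1)%N by rewrite (leq_trans (ltn_ord i)) // leq_addr.
  by have := inspan_mem v (Ordinal iD); rewrite /v /= ltn_ord.
have vb (i : 'I_D2.+1) : inspan v (tb ^+ i).
  have iD : (D1.+1 + i < D1.+1 + D2.+1)%N by rewrite ltn_add2l.
  by have := inspan_mem v (Ordinal iD); rewrite /v /= ltnNge leq_addr /= addKn.
have pa n : inspan v (a ^+ n).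
  by apply: (inspan_trans va); have := powers_shift rel1 lam1 n; rewrite /ta subrK.
have pb n : inspan v (b ^+ n).
  by apply: (inspan_trans vb); have := powers_shift rel2 lam2 n; rewrite /tb subrK.
move=> w [z <-]; have [s ->] := all_spanned z; rewrite (morph_comb _ fM).
by apply: inspan_sum => t; apply: inspanZ; rewrite (yX_xX ab); case: ifP.
Qed.

(* For n = nilp M, the endomorphism x |-> 1 + n, y |-> (1 + n)^-1 has image
   spanned by the linearly independent 1, n, ..., n^M. *)
Lemma endomorphism_of_dim M : exists f : A -> A, alg_morph f /\ has_dim (image_of f) M.+1.
Proof.
set n := nilp x y M; have nM : n ^+ M.+1 = 0 := nilp_nilpotent yx M.
pose a := 1 + n; pose b := \sum_(k < M.+1) (- n) ^+ k.
have ab : a * b = 1.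
  have := subrX1 (- n) M.+1; rewrite exprNn nM mulr0 sub0r => geom.
  by apply/esym; rewrite -[1]opprK geom -mulNr opprB opprK.
have ba : b * a = 1.
  suff comm_ab : GRing.comm a b by rewrite -comm_ab.
  apply: commr_sum => k _; apply/commrX/commrN.
  by rewrite /GRing.comm /a mulrDl mulrDr mul1r mulr1.
have [[f [fM [fx fy]]] _] := (proj2 S1) A a b ba.
exists f; split=> //; exists (fun k : 'I_M.+1 => n ^+ k).
have rel : n ^+ M.+1 = \sum_(i < M) (0 : K) *: n ^+ i.+1.
  by rewrite nM big1 // => i _; rewrite scale0r.
have span_b : inspan (fun k : 'I_M.+1 => n ^+ k) b.
  by apply: inspan_sum => k; rewrite -scaleN1r exprZn; apply/inspanZ/inspan_mem.
split.
- move=> k; exists ((x - 1) ^+ k).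
  by rewrite (morphX fM) (morphB fM) (morph1 fM) fx /a [1 + n]addrC addrK.
- move=> w [z <-]; have [s ->] := all_spanned z; rewrite (morph_comb _ fM) fx fy.
  apply: inspan_sum => t; apply: inspanZ; apply: (powers_mul rel).
    by have := powers_shift rel 1 t.1.2; rewrite scale1r /a addrC.
  elim: t.2 => [|j IH]; first by rewrite expr0; apply: powers_one.
  by rewrite exprS; apply: (powers_mul rel span_b IH).
- by move=> c c0; apply: (@nilp_powers_free _ _ _ _ yx idem_neq0 M c c0).
Qed.
End Presentation.

Unset Implicit Arguments.
Set Strict Implicit.

Theorem proposition4p7 (K : fieldType) (A : algType K) (x y : A) :
  [pchar K] =i pred0 ->
  S1_presentation x y ->
  (forall f : A -> A, alg_morph f ->
     injective f \/
     ((forall a b, f a * f b = f b * f a) /\ exists d : nat, has_dim (image_of f) d))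
  /\
  (forall d : nat, (0 < d)%N ->
     exists f : A -> A, alg_morph f /\ has_dim (image_of f) d).
Proof.
move=> _ S1; split=> [f fM|[|M] // _]; last exact: endomorphism_of_dim S1 M.
have [fidem|fidem] := eqVneq (f (idem x y)) 0.
  by right; apply: (image_of_idem_killed S1).
by left; apply: (injective_of_idem S1).
Qed.
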